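(* Every normal uniform Kan complex $A$ has a normal connection $c:A^{\mathrm{I}}\to A^{\mathrm{I}\times\mathrm{I}}$.
   Context: Let $\mathbb{B}$ be the category of finite sets $[n]=\{\bot,x_1,\dots,x_n,\top\}$ ($n\ge0$, $\bot\ne\top$) and functions preserving $\bot,\top$; cartesian cubical sets are presheaves on $\mathbb{B}^{op}$. $\mathrm{I}^n$ is the representable on $[n]$, $\mathrm{I}^n\cong\mathrm{I}\times\dots\times\mathrm{I}$, $\mathrm{I}=\mathrm{I}^1$, $\mathrm{I}^0=1$; maps $\mathrm{I}^n\to X$ correspond to $n$-cubes of $X$. The two maps $[1]\to[0]$ give endpoints $0,1:1\to\mathrm{I}$. For $1\le i\le n$, $d\in\{0,1\}$, the face $\alpha_i^d:\mathrm{I}^{n-1}\to\mathrm{I}^n$ inserts $d$ in coordinate $i$; for $e\in\{0,1\}$ the open box $\sqcup^n_e\rightarrowtail\mathrm{I}^n$ is the union of the images of all faces $\alpha_i^d$ with $(i,d)\ne(1,e)$, with inclusion $i^n_e$. A uniform Kan complex is a cubical set $A$ with, for each $n\ge1$, $e\in\{0,1\}$, $k\ge1$ and $b:\mathrm{I}^k\times\sqcup^n_e\to A$, a chosen extension $\phi(b):\mathrm{I}^k\times\mathrm{I}^n\to A$ of $b$ along $1\times i^n_e$, with $\phi(b(\alpha\times1))=\phi(b)(\alpha\times1)$ for all $\alpha:\mathrm{I}^j\to\mathrm{I}^k$ ($j\ge1$). It is normal if for all $n\ge0$, $e$, $k\ge1$ and $c:\mathrm{I}^k\times\mathrm{I}^n\to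 A$, with $\pi:\mathrm{I}^{n+1}\to\mathrm{I}^n$ forgetting the first coordinate, $\phi(c(1\times\pi)(1\times i^{n+1}_e))=c(1\times\pi)$. A connection on $X$ is a map of cubical sets $c:X^{\mathrm{I}}\to X^{\mathrm{I}\times\mathrm{I}}$ such that for every $n$-cube $a:\mathrm{I}^n\times\mathrm{I}\to X$ of $X^{\mathrm{I}}$, with $a_0=a(1\times0)$, the map $c(a):\mathrm{I}^n\times\mathrm{I}\times\mathrm{I}\to X$ (coordinates $(u,s,t)$) restricts on $s=1$ to $a$ and on $s=0$ and on $t=0$ to the constant path at $a_0$. It is normal if $c(x\circ\mathrm{pr})=x\circ\mathrm{pr}'$ for every $n$-cube $x:\mathrm{I}^n\to X$, where $\mathrm{pr}:\mathrm{I}^n\times\mathrm{I}\to\mathrm{I}^n$ and $\mathrm{pr}':\mathrm{I}^n\times\mathrm{I}\times\mathrm{I}\to\mathrm{I}^n$ are projections (i.e. $c$ sends constant paths to doubly degenerate squares). *)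

From Stdlib Require Import FunctionalExtensionality ProofIrrelevance.
From HB Require Import structures.
From mathcomp Require Import all_boot.

Set Implicit Arguments.
Unset Strict Implicit.
Unset Printing Implicit Defensive.

(* [n] = {bot, x_1, ..., x_n, top} is encoded as 'I_(n+2), with         *)
(* bot = 0, x_j = j, top = n+1.                                         *)

Definition Pt (n : nat) := 'I_n.+2.
Definition ptbot (n : nat) : Pt n := ord0.
Definition pttop (n : nat) : Pt n := ord_max.

Definition Bmor (n m : nat) :=
  {f : {ffun Pt n -> Pt m} | (f (ptbot n) == ptbot m) && (f (pttop n) == pttop m)}.

Definition bfun n m (f : Bmor n m) : Pt n -> Pt m := fun j => sval f j.

Lemma mkB_proof n m (f : Pt n -> Pt m) :
  f (ptbot n) = ptbot m -> f (pttop n) = pttop m ->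
  ((finfun f) (ptbot n) == ptbot m) && ((finfun f) (pttop n) == pttop m).
Proof. by move=> h1 h2; rewrite !ffunE h1 h2 !eqxx. Qed.

Definition mkB n m (f : Pt n -> Pt m) (h1 : f (ptbot n) = ptbot m)
  (h2 : f (pttop n) = pttop m) : Bmor n m :=
  exist _ (finfun f) (mkB_proof h1 h2).

Lemma bfun_bot n m (f : Bmor n m) : bfun f (ptbot n) = ptbot m.
Proof. by have /andP [/eqP h _] := svalP f; exact: h. Qed.

Lemma bfun_top n m (f : Bmor n m) : bfun f (pttop n) = pttop m.
Proof. by have /andP [_ /eqP h] := svalP f; exact: h. Qed.

Lemma bfun_mkB n m (f : Pt n -> Pt m) h1 h2 j : bfun (@mkB n m f h1 h2) j = f j.
Proof. by rewrite /bfun /= ffunE. Qed.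

Lemma Bmor_ext n m (f g : Bmor n m) : (forall j, bfun f j = bfun g j) -> f = g.
Proof. by move=> h; apply: val_inj; apply/ffunP => j; exact: h. Qed.

Definition idB n : Bmor n n := @mkB n n id erefl erefl.

Lemma compB_bot n m p (g : Bmor m p) (f : Bmor n m) :
  (bfun g \o bfun f) (ptbot n) = ptbot p.
Proof. by rewrite /= !bfun_bot. Qed.

Lemma compB_top n m p (g : Bmor m p) (f : Bmor n m) :
  (bfun g \o bfun f) (pttop n) = pttop p.
Proof. by rewrite /= !bfun_top. Qed.

Definition compB n m p (g : Bmor m p) (f : Bmor n m) : Bmor n p :=
  mkB (compB_bot g f) (compB_top g f).

Lemma compB1 n m (f : Bmor n m) : compB (idB m) f = f.
Proof. by apply: Bmor_ext => j; rewrite !bfun_mkB /= bfun_mkB. Qed.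

Lemma comp1B n m (f : Bmor n m) : compB f (idB n) = f.
Proof. by apply: Bmor_ext => j; rewrite !bfun_mkB /= bfun_mkB. Qed.

Lemma compBA n m p q (h : Bmor p q) (g : Bmor m p) (f : Bmor n m) :
  compB h (compB g f) = compB (compB h g) f.
Proof. by apply: Bmor_ext => j; rewrite !bfun_mkB /= !bfun_mkB. Qed.

(* Cartesian cubical sets = presheaves on B^op = functors B -> Type.    *)
(* cob X n is the set of n-cubes X([n]).                                *)

Record cset := CSet {
  cob : nat -> Type;
  cact : forall n m, Bmor n m -> cob n -> cob m;
  cact_id : forall n x, cact (idB n) x = x;
  cact_comp : forall n m p (f : Bmor n m) (g : Bmor m p) x,
      cact (compB g f) x = cact g (cact f x)
}.
Arguments cact {c n m}.

Record cmap (X Y : cset) := CMap {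
  cfun : forall n, cob X n -> cob Y n;
  cnat : forall n m (f : Bmor n m) x, cfun (cact f x) = cact f (cfun x)
}.
Arguments cfun {X Y} c {n}.

Lemma cmap_ext X Y (f g : cmap X Y) :
  (forall n x, @cfun _ _ f n x = @cfun _ _ g n x) -> f = g.
Proof.
case: f g => f fN [g gN] /= H.
have E : f = g.
  by apply: functional_extensionality_dep => n; apply: functional_extensionality.
subst g; by rewrite (proof_irrelevance _ fN gN).
Qed.

Definition cid X : cmap X X := @CMap X X (fun n x => x) (fun _ _ _ _ => erefl).

Lemma ccomp_nat X Y Z (g : cmap Y Z) (f : cmap X Y) n m (h : Bmor n m) x :
  cfun g (cfun f (cact h x)) = cact h (cfun g (cfun f x)).
Proof. by rewrite !cnat. Qed.

Definition ccomp X Y Z (g : cmap Y Z) (f : cmap X Y) : cmap X Z :=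
  CMap (ccomp_nat g f).

Definition yo (n : nat) : cset :=
  @CSet (fun m => Bmor n m) (fun m p (g : Bmor m p) (h : Bmor n m) => compB g h)
        (fun m h => compB1 h) (fun m p q f g h => esym (compBA g f h)).

Lemma ymap_nat n m (g : Bmor n m) p q (f : Bmor p q) (h : Bmor m p) :
  compB (compB f h) g = compB f (compB h g).
Proof. by rewrite compBA. Qed.

Definition ymap n m (g : Bmor n m) : cmap (yo m) (yo n) :=
  @CMap (yo m) (yo n) (fun p (h : Bmor m p) => compB h g) (ymap_nat g).

Lemma zeroB_bot m :
  (fun j : Pt 0 => if val j == 0 then ptbot m else pttop m) (ptbot 0) = ptbot m.
Proof. by []. Qed.
Lemma zeroB_top m :
  (fun j : Pt 0 => if val j == 0 then ptbot m else pttop m) (pttop 0) = pttop m.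
Proof. by []. Qed.
Definition zeroB m : Bmor 0 m := mkB (zeroB_bot m) (zeroB_top m).

Lemma zeroB_uniq m (f : Bmor 0 m) : f = zeroB m.
Proof.
apply: Bmor_ext => j; rewrite bfun_mkB.
case: j => [[|[|//]] Hj] /=.
  by rewrite -(bfun_bot f); congr bfun; apply: val_inj.
by rewrite -(bfun_top f); congr bfun; apply: val_inj.
Qed.

Lemma cbang_nat X n m (f : Bmor n m) (x : cob X n) :
  zeroB m = compB f (zeroB n).
Proof. by rewrite (zeroB_uniq (compB f (zeroB n))). Qed.

Definition cbang X : cmap X (yo 0) :=
  @CMap X (yo 0) (fun n _ => zeroB n) (@cbang_nat X).

Definition cprod (X Y : cset) : cset :=
  @CSet (fun n => (cob X n * cob Y n)%type)
        (fun n m f xy => (cact f xy.1, cact f xy.2))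
        (fun n xy => ltac:(by case: xy => x y; rewrite /= !cact_id))
        (fun n m p f g xy => ltac:(by case: xy => x y; rewrite /= !cact_comp)).

Definition cfst X Y : cmap (cprod X Y) X :=
  @CMap (cprod X Y) X (fun n xy => xy.1) (fun _ _ _ _ => erefl).
Definition csnd X Y : cmap (cprod X Y) Y :=
  @CMap (cprod X Y) Y (fun n xy => xy.2) (fun _ _ _ _ => erefl).

Lemma cpair_nat Z X Y (f : cmap Z X) (g : cmap Z Y) n m (h : Bmor n m) z :
  (cfun f (cact h z), cfun g (cact h z)) =
  @cact (cprod X Y) _ _ h (cfun f z, cfun g z).
Proof. by rewrite /= !cnat. Qed.

Definition cpair Z X Y (f : cmap Z X) (g : cmap Z Y) : cmap Z (cprod X Y) :=
  @CMap Z (cprod X Y) (fun n z => (cfun f z, cfun g z)) (cpair_nat f g).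

Definition cprodmap X Y X' Y' (f : cmap X X') (g : cmap Y Y') :
  cmap (cprod X Y) (cprod X' Y') :=
  cpair (ccomp f (cfst X Y)) (ccomp g (csnd X Y)).

Section Sub.
Variables (X : cset) (P : forall n, cob X n -> Prop)
          (HP : forall n m (f : Bmor n m) (x : cob X n), P x -> P (cact f x)).

Lemma sig_ext T (Q : T -> Prop) (a b : {x | Q x}) : sval a = sval b -> a = b.
Proof.
case: a b => a Ha [b Hb] /= E; subst b; by rewrite (proof_irrelevance _ Ha Hb).
Qed.

Definition csub_act n m (f : Bmor n m) (x : {x : cob X n | P x}) :
  {x : cob X m | P x} := exist _ (cact f (sval x)) (HP f (svalP x)).

Definition csub : cset :=
  @CSet (fun n => {x : cob X n | P x}) csub_act
        (fun n x => @sig_ext _ _ (csub_act (idB n) x) x (cact_id (sval x)))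
        (fun n m p f g x => @sig_ext _ _ (csub_act (compB g f) x) (csub_act g (csub_act f x)) (cact_comp f g (sval x))).

Definition cincl : cmap csub X :=
  @CMap csub X (fun n x => sval x) (fun _ _ _ _ => erefl).
End Sub.

(* For i : 'I_n.+1 (coordinate i+1 in 1-based numbering, 1 <= i+1 <= n+1)
   and d : bool (false = 0, true = 1), the B-morphism [n+1] -> [n]
   sending x_(i+1) to d (bot for 0, top for 1) and the other x_j's in order
   to x_1..x_n.  It induces the face alpha_(i+1)^d : I^n -> I^(n+1). *)
Definition faceF n (i : 'I_n.+1) (d : bool) (j : Pt n.+1) : Pt n :=
  if val j == i.+1 then (if d then pttop n else ptbot n)
  else if val j < i.+1 then inord (val j) else inord (val j).-1.

Lemma faceF_bot n i d : @faceF n i d (ptbot n.+1) = ptbot n.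
Proof. by apply: val_inj; rewrite /faceF /= inordK. Qed.

Lemma faceF_top n i d : @faceF n i d (pttop n.+1) = pttop n.
Proof.
have Hi := ltn_ord i.
rewrite /faceF /=.
have -> : (n.+2 == i.+1) = false.
  by apply/eqP => -[E]; rewrite -E ltnn in Hi.
have -> : (n.+2 < i.+1) = false by rewrite ltnS ltnNge ltnW.
by apply: val_inj; rewrite /= inordK.
Qed.

Definition faceB n (i : 'I_n.+1) (d : bool) : Bmor n.+1 n :=
  mkB (faceF_bot i d) (faceF_top i d).

Definition face n (i : 'I_n.+1) (d : bool) : cmap (yo n) (yo n.+1) :=
  ymap (faceB i d).

(* the open box  sqcup^(n+1)_e  as a sub-presheaf of I^(n+1): the union of
   the images of all faces alpha_i^d with (i,d) <> (1,e). *)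
Definition boxP n (e : bool) m (x : cob (yo n.+1) m) : Prop :=
  exists (i : 'I_n.+1) (d : bool), ((i != ord0) || (d != e)) /\
    exists y : cob (yo n) m, cfun (face i d) y = x.

Lemma boxP_closed n e m p (f : Bmor m p) (x : cob (yo n.+1) m) :
  boxP e x -> boxP e (cact f x).
Proof.
case=> i [d [H [y <-]]]; exists i, d; split=> //.
by exists (cact f y); rewrite cnat.
Qed.

Definition box n e : cset := csub (@boxP_closed n e).

Definition boxincl n e : cmap (box n e) (yo n.+1) := cincl (@boxP_closed n e).

(* the B-morphism [n] -> [n+1], x_j |-> x_(j+1); it induces the projection
   pi : I^(n+1) -> I^n forgetting the first coordinate *)
Definition piF n (j : Pt n) : Pt n.+1 :=
  if val j == 0 then ptbot n.+1 else inord (val j).+1.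

Lemma piF_bot n : piF (ptbot n) = ptbot n.+1. Proof. by []. Qed.
Lemma piF_top n : piF (pttop n) = pttop n.+1.
Proof. by apply: val_inj; rewrite /piF /= inordK. Qed.

Definition piB n : Bmor n n.+1 := mkB (@piF_bot n) (@piF_top n).
Definition cpi n : cmap (yo n.+1) (yo n) := ymap (piB n).

(* endpoints 0, 1 : 1 -> I, induced by the two maps [1] -> [0]
   (x_1 |-> bot gives 0, x_1 |-> top gives 1) *)
Definition endF (d : bool) (j : Pt 1) : Pt 0 :=
  if val j == 0 then ptbot 0 else if val j == 2 then pttop 0
  else if d then pttop 0 else ptbot 0.
Lemma endF_bot d : endF d (ptbot 1) = ptbot 0. Proof. by []. Qed.
Lemma endF_top d : endF d (pttop 1) = pttop 0. Proof. by []. Qed.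
Definition endB d : Bmor 1 0 := mkB (endF_bot d) (endF_top d).
Definition cend (d : bool) : cmap (yo 0) (yo 1) := ymap (endB d).

(* For n >= 1, k >= 1 (written n.+1, k.+1), b : I^k x sqcup^n_e -> A,
   a chosen extension kfill b : I^k x I^n -> A along 1 x i^n_e,
   uniform in I^k. *)
Record ukan (A : cset) := UKan {
  kfill : forall (n : nat) (e : bool) (k : nat),
      cmap (cprod (yo k.+1) (box n e)) A -> cmap (cprod (yo k.+1) (yo n.+1)) A;
  kfill_ext : forall n e k (b : cmap (cprod (yo k.+1) (box n e)) A),
      ccomp (kfill b) (cprodmap (cid (yo k.+1)) (boxincl n e)) = b;
  kfill_unif : forall n e k j (a : cmap (yo j.+1) (yo k.+1))
      (b : cmap (cprod (yo k.+1) (box n e)) A),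
      kfill (ccomp b (cprodmap a (cid (box n e))))
      = ccomp (kfill b) (cprodmap a (cid (yo n.+1)))
}.
Arguments kfill {A} u {n e k}.

Definition normal_ukan (A : cset) (K : ukan A) : Prop :=
  forall (n : nat) (e : bool) (k : nat) (c : cmap (cprod (yo k.+1) (yo n)) A),
    kfill K (ccomp (ccomp c (cprodmap (cid (yo k.+1)) (cpi n)))
                   (cprodmap (cid (yo k.+1)) (boxincl n e)))
    = ccomp c (cprodmap (cid (yo k.+1)) (cpi n)).

Definition cexp_act (X Z : cset) n m (f : Bmor n m)
  (a : cmap (cprod (yo n) Z) X) : cmap (cprod (yo m) Z) X :=
  ccomp a (cprodmap (ymap f) (cid Z)).

Lemma cexp_act_id X Z n a : @cexp_act X Z n n (idB n) a = a.
Proof. by apply: cmap_ext => p [h z]; rewrite /= comp1B. Qed.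

Lemma cexp_act_comp X Z n m p (f : Bmor n m) (g : Bmor m p) a :
  @cexp_act X Z n p (compB g f) a = cexp_act g (cexp_act f a).
Proof. by apply: cmap_ext => q [h z]; rewrite /= compBA. Qed.

Definition cexp (X Z : cset) : cset :=
  @CSet (fun n => cmap (cprod (yo n) Z) X) (@cexp_act X Z)
        (@cexp_act_id X Z) (@cexp_act_comp X Z).

Definition I := yo 1.

(* For a : I^n x I -> X, a_0 = a(1 x 0) : I^n (= I^n x 1) -> X *)
Definition cstart X n (a : cmap (cprod (yo n) I) X) : cmap (yo n) X :=
  ccomp a (cpair (cid (yo n)) (ccomp (cend false) (cbang (yo n)))).

(* I^n x I -> I^n x (I x I),  (u, t) |-> (u, (d, t)) *)
Definition at_s n (d : bool) : cmap (cprod (yo n) I) (cprod (yo n) (cprod I I)) :=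
  cpair (cfst _ _) (cpair (ccomp (cend d) (cbang _)) (csnd _ _)).

(* I^n x I -> I^n x (I x I),  (u, s) |-> (u, (s, 0)) *)
Definition at_t0 n : cmap (cprod (yo n) I) (cprod (yo n) (cprod I I)) :=
  cpair (cfst _ _) (cpair (csnd _ _) (ccomp (cend false) (cbang _))).

Definition is_connection (X : cset) (c : cmap (cexp X I) (cexp X (cprod I I))) : Prop :=
  forall (n : nat) (a : cmap (cprod (yo n) I) X),
    ccomp (cfun c a) (at_s n true) = a /\
    ccomp (cfun c a) (at_s n false) = ccomp (cstart a) (cfst (yo n) I) /\
    ccomp (cfun c a) (at_t0 n) = ccomp (cstart a) (cfst (yo n) I).

Definition normal_connection (X : cset) (c : cmap (cexp X I) (cexp X (cprod I I))) : Prop :=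
  forall (n : nat) (x : cmap (yo n) X),
    cfun c (ccomp x (cfst (yo n) I)) = ccomp x (cfst (yo n) (cprod I I)).

From mathcomp Require Import all_boot zify.

Set Implicit Arguments.
Unset Strict Implicit.
Unset Printing Implicit Defensive.

(* The connection square c(a)(u, s, t) is a Kan filler. Seen as a 2-cube with
   first coordinate t and second coordinate s, the square has its faces
   s = 1, s = 0 and t = 0 prescribed (a, and twice the constant path at a_0),
   and these form exactly the open box missing the face t = 1. Filling
   uniformly in the parameter cube u makes c natural; since fillers are only
   provided over parameter cubes of positive dimension, u is padded by an
   extra coordinate set to 0. If a is a constant path, the box is the
   restriction of a cube degenerate in both box directions, so normality of
   the Kan structure makes the filler, hence c(a), doubly degenerate. *)

Lemma bfun_compB n m p (g : Bmor m p) (f : Bmor n m) j :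
  bfun (compB g f) j = bfun g (bfun f j).
Proof. exact: bfun_mkB. Qed.

Lemma Bmor_inner_ext n m (f g : Bmor n m) :
  (forall j : Pt n, 0 < val j <= n -> bfun f j = bfun g j) -> f = g.
Proof.
move=> fg; apply: Bmor_ext => -[j ltj].
case: (posnP j) => [j0 | j_gt0].
  have -> : Ordinal ltj = ptbot n by apply: val_inj.
  by rewrite !bfun_bot.
case: (leqP j n) => [le_jn | lt_nj]; first by apply: fg; rewrite j_gt0.
have -> : Ordinal ltj = pttop n by apply: val_inj => /=; lia.
by rewrite !bfun_top.
Qed.

Definition pt1 : Pt 1 := @Ordinal 3 1 erefl.
Definition pt2_1 : Pt 2 := @Ordinal 4 1 erefl.
Definition pt2_2 : Pt 2 := @Ordinal 4 2 erefl.

Lemma Bmor1_ext m (f g : Bmor 1 m) : bfun f pt1 = bfun g pt1 -> f = g.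
Proof.
move=> fg; apply: Bmor_inner_ext => -[[|[|//]] lt1] //= _.
by rewrite (_ : Ordinal lt1 = pt1) //; exact: val_inj.
Qed.

Lemma Bmor2_ext m (f g : Bmor 2 m) :
  bfun f pt2_1 = bfun g pt2_1 -> bfun f pt2_2 = bfun g pt2_2 -> f = g.
Proof.
move=> fg1 fg2; apply: Bmor_inner_ext => -[[|[|[|//]]] lt2] //= _.
  by rewrite (_ : Ordinal lt2 = pt2_1) //; exact: val_inj.
by rewrite (_ : Ordinal lt2 = pt2_2) //; exact: val_inj.
Qed.

Definition endptB (d : bool) m : Bmor 1 m := compB (zeroB m) (endB d).

Lemma endptB_nat d m p (f : Bmor m p) : compB f (endptB d m) = endptB d p.
Proof. by rewrite /endptB compBA; congr compB; apply: zeroB_uniq. Qed.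

Lemma endptB_pt1 d m : bfun (endptB d m) pt1 = if d then pttop m else ptbot m.
Proof. by rewrite bfun_compB !bfun_mkB; case: d. Qed.

Definition pairF m (t s : Bmor 1 m) (j : Pt 2) : Pt m :=
  if val j == 0 then ptbot m else if val j == 1 then bfun t pt1
  else if val j == 2 then bfun s pt1 else pttop m.

Definition pairB m (t s : Bmor 1 m) : Bmor 2 m :=
  @mkB 2 m (pairF t s) erefl erefl.

Lemma pairB_pt2_1 m (t s : Bmor 1 m) : bfun (pairB t s) pt2_1 = bfun t pt1.
Proof. exact: bfun_mkB. Qed.

Lemma pairB_pt2_2 m (t s : Bmor 1 m) : bfun (pairB t s) pt2_2 = bfun s pt1.
Proof. exact: bfun_mkB. Qed.

Lemma pairB_nat m p (f : Bmor m p) (t s : Bmor 1 m) :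
  compB f (pairB t s) = pairB (compB f t) (compB f s).
Proof. by apply: Bmor2_ext; rewrite !(bfun_compB, pairB_pt2_1, pairB_pt2_2). Qed.

Definition fstF (j : Pt 1) : Pt 2 :=
  if val j == 0 then ptbot 2 else if val j == 1 then pt2_1 else pttop 2.

Definition fstB : Bmor 1 2 := @mkB 1 2 fstF erefl erefl.

Lemma pairB_fst m (t s : Bmor 1 m) : compB (pairB t s) fstB = t.
Proof. by apply: Bmor1_ext; rewrite bfun_compB [bfun fstB _]bfun_mkB pairB_pt2_1. Qed.

(* [inclB n] induces the projection I^(n+1) -> I^n forgetting the last
   coordinate; [extB u y] is the (n+1)-cube whose restriction is u and whose
   last coordinate is y. *)
Definition inclF n (j : Pt n) : Pt n.+1 :=
  if val j <= n then inord (val j) else pttop n.+1.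

Lemma inclF_bot n : inclF (ptbot n) = ptbot n.+1.
Proof. by apply: val_inj; rewrite /inclF /= inordK. Qed.

Lemma inclF_top n : inclF (pttop n) = pttop n.+1.
Proof. by rewrite /inclF /= ltnn. Qed.

Definition inclB n : Bmor n n.+1 := mkB (@inclF_bot n) (@inclF_top n).

Definition extF n m (u : Bmor n m) (y : Pt m) (j : Pt n.+1) : Pt m :=
  if val j <= n then bfun u (inord (val j))
  else if val j == n.+1 then y else pttop m.

Lemma extF_bot n m (u : Bmor n m) y : extF u y (ptbot n.+1) = ptbot m.
Proof.
by rewrite /extF /= -(bfun_bot u); congr bfun; apply: val_inj; rewrite /= inordK.
Qed.

Lemma extF_top n m (u : Bmor n m) y : extF u y (pttop n.+1) = pttop m.
Proof. by rewrite /extF /= ifF; [rewrite ifF //|]; lia. Qed.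

Definition extB n m (u : Bmor n m) (y : Pt m) : Bmor n.+1 m :=
  mkB (extF_bot u y) (extF_top u y).

Definition lastpt n : Pt n.+1 := inord n.+1.

Lemma extB_nat n m p (f : Bmor m p) (u : Bmor n m) y :
  compB f (extB u y) = extB (compB f u) (bfun f y).
Proof.
apply: Bmor_ext => j; rewrite bfun_compB !bfun_mkB /extF.
case: ifP => _; first by rewrite bfun_compB.
by case: ifP => _; rewrite ?bfun_top.
Qed.

Lemma extB_incl n m (u : Bmor n m) y : compB (extB u y) (inclB n) = u.
Proof.
apply: Bmor_ext => -[j ltj]; rewrite bfun_compB !bfun_mkB /inclF /extF /=.
case: (leqP j n) => [le_jn | lt_nj].
  by rewrite inordK ?le_jn //; [congr bfun; apply: val_inj; rewrite /= inordK | lia].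
have -> : Ordinal ltj = pttop n by apply: val_inj => /=; lia.
by rewrite bfun_top /= ifF; [rewrite ifF //|]; lia.
Qed.

Lemma extB_last n m (u : Bmor n m) y : bfun (extB u y) (lastpt n) = y.
Proof. by rewrite bfun_mkB /extF /lastpt /= inordK // ltnn eqxx. Qed.

Definition padB n m (u : Bmor n m) : Bmor n.+1 m := extB u (ptbot m).

Definition liftB n m (f : Bmor n m) : Bmor n.+1 m.+1 :=
  extB (compB (inclB m) f) (lastpt m).

Lemma padB_nat n m p (f : Bmor m p) (u : Bmor n m) :
  compB f (padB u) = padB (compB f u).
Proof. by rewrite /padB extB_nat bfun_bot. Qed.

Lemma padB_lift n m p (f : Bmor n m) (u : Bmor m p) :
  compB (padB u) (liftB f) = padB (compB u f).
Proof. by rewrite /liftB extB_nat compBA extB_incl extB_last. Qed.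

Lemma boxP_true_cases m (x : Bmor 2 m) : boxP true x ->
  [\/ bfun x pt2_2 = pttop m, bfun x pt2_2 = ptbot m | bfun x pt2_1 = ptbot m].
Proof.
case=> -[[|[|//]] ?] [d [/= face_ok [y <-]]]; rewrite /= !bfun_compB !bfun_mkB.
- by case: d face_ok => // _; apply: Or33; rewrite bfun_bot.
- by case: d {face_ok}; [apply: Or31; rewrite bfun_top | apply: Or32; rewrite bfun_bot].
Qed.

Lemma boxP_pairB_end m (d : bool) (t : Bmor 1 m) : boxP true (pairB t (endptB d m)).
Proof.
exists (@Ordinal 2 1 erefl), d; split => //; exists t.
apply: Bmor2_ext; rewrite /= bfun_compB bfun_mkB /faceF /= ?pairB_pt2_1 ?pairB_pt2_2.
  by congr bfun; apply: val_inj; rewrite /= inordK.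
by rewrite endptB_pt1; case: d; rewrite ?bfun_top ?bfun_bot.
Qed.

Lemma boxP_pairB_bot m (s : Bmor 1 m) : boxP true (pairB (endptB false m) s).
Proof.
exists ord0, false; split => //; exists s.
apply: Bmor2_ext; rewrite /= bfun_compB bfun_mkB /faceF /= ?pairB_pt2_1 ?pairB_pt2_2.
  by rewrite endptB_pt1 bfun_bot.
by congr bfun; apply: val_inj; rewrite /= inordK.
Qed.

Lemma kfill_box A (K : ukan A) n e k (b : cmap (cprod (yo k.+1) (box n e)) A)
    m (v : Bmor k.+1 m) (x : Bmor n.+1 m) (box_x : boxP e x) :
  @cfun _ _ (kfill K b) m (v, x) = @cfun _ _ b m (v, exist _ x box_x).
Proof.
by have := congr1 (fun F : cmap (cprod (yo k.+1) (box n e)) A =>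
  @cfun _ _ F m (v, exist _ x box_x)) (kfill_ext K b).
Qed.

Section Connection.

Variable A : cset.

Definition conn_boxF n (a : cmap (cprod (yo n) I) A) m
    (vx : cob (cprod (yo n.+1) (box 1 true)) m) : cob A m :=
  let u := compB vx.1 (inclB n) in
  if bfun (sval vx.2) pt2_2 == pttop m
  then @cfun _ _ a m (u, compB (sval vx.2) fstB)
  else @cfun _ _ a m (u, endptB false m).

Lemma conn_boxF_nat n a m p (f : Bmor m p) vx :
  @conn_boxF n a p (cact f vx) = cact f (@conn_boxF n a m vx).
Proof.
case: vx => v [x box_x]; rewrite /conn_boxF /= bfun_compB.
case: (boolP (bfun x pt2_2 == pttop m)) => [/eqP -> | x2_ntop].
  by rewrite bfun_top eqxx -cnat /= !compBA.
rewrite -cnat /= compBA endptB_nat; case: ifP => // fx2_top.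
(* on the corner s = 1, t = 0 both prescriptions of the box agree *)
have x1_bot : bfun x pt2_1 = ptbot m.
  case: (boxP_true_cases box_x) => // x2; first by rewrite x2 eqxx in x2_ntop.
  by rewrite x2 bfun_bot in fx2_top.
congr (cfun a (_, _)); apply: Bmor1_ext.
by rewrite endptB_pt1 !bfun_compB bfun_mkB /= x1_bot bfun_bot.
Qed.

Definition conn_box n (a : cmap (cprod (yo n) I) A) :
  cmap (cprod (yo n.+1) (box 1 true)) A := CMap (@conn_boxF_nat n a).

Lemma conn_box_act n m (f : Bmor n m) (a : cmap (cprod (yo n) I) A) :
  conn_box (cexp_act f a) =
  ccomp (conn_box a) (cprodmap (ymap (liftB f)) (cid (box 1 true))).
Proof.
by apply: cmap_ext => p [v [x box_x]]; rewrite /= /conn_boxF /= -!compBA extB_incl.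
Qed.

Lemma conn_box_const n (x : cmap (yo n) A) :
  conn_box (ccomp x (cfst (yo n) I)) =
  ccomp (ccomp (ccomp x (ccomp (ymap (inclB n)) (cfst (yo n.+1) (yo 1))))
               (cprodmap (cid (yo n.+1)) (cpi 1)))
        (cprodmap (cid (yo n.+1)) (boxincl 1 true)).
Proof. by apply: cmap_ext => p [v [w box_w]]; rewrite /= /conn_boxF; case: ifP. Qed.

Variable K : ukan A.

Definition conn_squareF n (a : cmap (cprod (yo n) I) A) m
    (ust : cob (cprod (yo n) (cprod I I)) m) : cob A m :=
  @cfun _ _ (kfill K (conn_box a)) m (padB ust.1, pairB ust.2.2 ust.2.1).

Lemma conn_squareF_nat n a m p (f : Bmor m p) ust :
  @conn_squareF n a p (cact f ust) = cact f (@conn_squareF n a m ust).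
Proof. by case: ust => u [s t]; rewrite /conn_squareF -cnat /= padB_nat pairB_nat. Qed.

Definition conn_square n a : cmap (cprod (yo n) (cprod I I)) A :=
  CMap (@conn_squareF_nat n a).

Lemma conn_square_nat n m (f : Bmor n m) (a : cob (cexp A I) n) :
  conn_square (cact f a) = @cact (cexp A (cprod I I)) _ _ f (conn_square a).
Proof.
apply: cmap_ext => p [u [s t]].
by rewrite /= /conn_squareF /= conn_box_act (kfill_unif K) /= padB_lift.
Qed.

Definition connection : cmap (cexp A I) (cexp A (cprod I I)) :=
  @CMap (cexp A I) (cexp A (cprod I I)) (@conn_square) conn_square_nat.

Lemma connection_is_connection : is_connection connection.
Proof.
move=> n a; split; [|split]; apply: cmap_ext => m [u r].
- rewrite /= /conn_squareF -/(endptB true m) (kfill_box K _ _ (boxP_pairB_end true r)).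
  by rewrite /= /conn_boxF /= pairB_pt2_2 endptB_pt1 eqxx extB_incl pairB_fst.
- rewrite /= /conn_squareF -/(endptB false m) (kfill_box K _ _ (boxP_pairB_end false r)).
  by rewrite /= /conn_boxF /= pairB_pt2_2 endptB_pt1 extB_incl.
- rewrite /= /conn_squareF -/(endptB false m) (kfill_box K _ _ (boxP_pairB_bot r)).
  by rewrite /= /conn_boxF /= extB_incl pairB_fst; case: ifP.
Qed.

Lemma connection_normal : normal_ukan K -> normal_connection connection.
Proof.
move=> normK n x; apply: cmap_ext => m [u [s t]].
by rewrite /= /conn_squareF conn_box_const normK /= extB_incl.
Qed.

End Connection.

Theorem lemma3p11 (A : cset) (K : ukan A) :
  normal_ukan K ->
  exists c : cmap (cexp A I) (cexp A (cprod I I)),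
    is_connection c /\ normal_connection c.
Proof.
move=> normK; exists (connection K).
by split; [exact: connection_is_connection | exact: connection_normal].
Qed.
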